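(* Let $k$ be an algebraically closed field of characteristic zero and $0<l<n$. Let $Y,Z\subset\mathbb P^n$ be closed subvarieties with saturated homogeneous ideals $I_Y,I_Z\subset k[x_0,\dots,x_n]$, and let $X$ be defined by $I_X=I_Y\cap I_Z$. Suppose $Y\subset\{x_0=\cdots=x_{l-1}=0\}$ and $Z\subset\{x_{l+1}=\cdots=x_n=0\}$, and that $Y\cap Z\neq\emptyset$, so that $Y\cap Z=\{p\}$ where $p$ is the point whose only nonzero coordinate is $x_l$. Then for every monomial order $\prec$ on $k[x_0,\dots,x_n]$, \[ \mathrm{in}_\prec(I_X)=\langle\mathrm{in}_\prec(I_Y\cap k[x_l,\dots,x_n])\rangle+\langle\mathrm{in}_\prec(I_Z\cap k[x_0,\dots,x_l])\rangle+T, \] where $T=\langle x_0,\dots,x_{l-1}\rangle\langle x_{l+1},\dots,x_n\rangle$, $\mathrm{in}_\prec(I_Y\cap k[x_l,\dots,x_n])$ is computed in $k[x_l,\dots,x_n]$ (with the restricted order) and $\langle\cdot\rangle$ denotes the ideal it generates in $k[x_0,\dots,x_n]$; similarly for $Z$. *)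

From HB Require Import structures.
From mathcomp Require Import all_boot all_order all_algebra.
From mathcomp Require Import mpoly.
Set Implicit Arguments. Unset Strict Implicit. Unset Printing Implicit Defensive.
Import GRing.Theory.
Local Open Scope ring_scope.

Section Defs.
Variables (k : fieldType) (N : nat).

Definition monomial_order (lt : rel 'X_{1..N}) : Prop :=
  [/\ irreflexive lt, transitive lt,
      (forall m1 m2, m1 != m2 -> lt m1 m2 || lt m2 m1),
      (forall m1 m2 m3, lt m1 m2 -> lt (m1 + m3)%MM (m2 + m3)%MM)
    & well_founded (fun a b => lt a b)].

Definition is_lead_mono (lt : rel 'X_{1..N}) (f : {mpoly k[N]}) (m : 'X_{1..N}) :=
  m \in msupp f /\ forall m', m' \in msupp f -> m' != m -> lt m' m.

Definition is_ideal (J : {mpoly k[N]} -> Prop) : Prop :=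
  [/\ J 0, (forall f g, J f -> J g -> J (f + g)) & (forall f g, J g -> J (f * g))].

Definition ideal_gen (S : {mpoly k[N]} -> Prop) (f : {mpoly k[N]}) : Prop :=
  forall J, is_ideal J -> (forall g, S g -> J g) -> J f.

Definition ideal_add (I J : {mpoly k[N]} -> Prop) (f : {mpoly k[N]}) : Prop :=
  exists g h, [/\ I g, J h & f = g + h].

Definition ideal_mul (I J : {mpoly k[N]} -> Prop) : {mpoly k[N]} -> Prop :=
  ideal_gen (fun f => exists g h, [/\ I g, J h & f = g * h]).

Definition initial_ideal (lt : rel 'X_{1..N}) (I : {mpoly k[N]} -> Prop) :=
  ideal_gen (fun f => exists g m, [/\ I g, is_lead_mono lt g m & f = 'X_[m]]).

Definition homogeneous (p : {mpoly k[N]}) : Prop :=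
  exists d, forall m, m \in msupp p -> mdeg m = d.

(* A closed subset of P^{N-1}, represented by its affine cone minus the origin:
   the nonzero common zeros of a set S of homogeneous polynomials. *)
Definition proj_closed (Y : ('I_N -> k) -> Prop) : Prop :=
  exists S : {mpoly k[N]} -> Prop,
    (forall s, S s -> homogeneous s) /\
    forall v, Y v <-> ((exists i, v i != 0) /\ forall s, S s -> s.@[v] = 0).

(* saturated homogeneous ideal of Y: the polynomials vanishing on Y
   (i.e. on its affine cone) *)
Definition vanishing_ideal (Y : ('I_N -> k) -> Prop) (f : {mpoly k[N]}) : Prop :=
  forall v, Y v -> f.@[v] = 0.

Definition in_vars (P : pred nat) (f : {mpoly k[N]}) : Prop :=
  forall m i, m \in msupp f -> (m i > 0)%N -> P (nat_of_ord i).

End Defs.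

From HB Require Import structures.
From mathcomp Require Import all_boot all_order all_algebra.
From mathcomp Require Import mpoly.
Local Open Scope ring_scope.

(* If the leading monomial x^m of some f in I_X involves variables on both
   sides of x_l, it lies in T.  Otherwise, say x^m avoids x_(l+1), ..., x_n:
   dropping from f all monomials involving these variables changes neither
   the values of f on Z nor its leading monomial, so x^m is the leading
   monomial of an element of I_Z in k[x_0, ..., x_l].  Conversely x_i x_j
   vanishes on Y and on Z, and I_Y ∩ k[x_l, ..., x_n] lies in I_Z: on Z such
   a polynomial only sees the coordinate x_l, and it vanishes on the whole
   line through p, the origin included, since its restriction to that line is
   a one-variable polynomial with infinitely many roots. *)

Set Implicit Arguments. Unset Strict Implicit. Unset Printing Implicit Defensive.
Import GRing.Theory.

Section Ideals.
Variables (k : fieldType) (N : nat).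
Implicit Types (S I J K : {mpoly k[N]} -> Prop) (f g : {mpoly k[N]}).

Lemma ideal_gen_ideal S : is_ideal (ideal_gen S).
Proof.
split=> [J [] //|f g Sf Sg J idJ SJ|f g Sg J idJ SJ]; case: (idJ) => _ JD JM.
- by apply: JD; [apply: Sf | apply: Sg].
- by apply: JM; apply: Sg.
Qed.

Lemma ideal_gen_sub S f : S f -> ideal_gen S f.
Proof. by move=> Sf J _; apply. Qed.

Lemma ideal_add_ideal I J : is_ideal I -> is_ideal J -> is_ideal (ideal_add I J).
Proof.
move=> [I0 ID IM] [J0 JD JM]; split.
- by exists 0, 0; rewrite addr0.
- move=> _ _ [a [b [Ia Jb ->]]] [c [d [Ic Jd ->]]].
  by exists (a + c), (b + d); rewrite addrACA; split; [apply: ID | apply: JD |].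
- move=> f _ [a [b [Ia Jb ->]]].
  by exists (f * a), (f * b); rewrite mulrDr; split; [apply: IM | apply: JM |].
Qed.

Lemma ideal_addl I J f : is_ideal J -> I f -> ideal_add I J f.
Proof. by move=> [J0 _ _] If; exists f, 0; rewrite addr0. Qed.

Lemma ideal_addr I J f : is_ideal I -> J f -> ideal_add I J f.
Proof. by move=> [I0 _ _] Jf; exists 0, f; rewrite add0r. Qed.

Lemma ideal_add_min I J K : is_ideal K ->
  (forall f, I f -> K f) -> (forall f, J f -> K f) ->
  forall f, ideal_add I J f -> K f.
Proof. by move=> [_ KD _] IK JK _ [a [b [Ia Jb ->]]]; apply: KD; auto. Qed.

Lemma ideal_mul_gen_min S S' K : is_ideal K ->
  (forall a b, S a -> S' b -> K (a * b)) ->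
  forall f, ideal_mul (ideal_gen S) (ideal_gen S') f -> K f.
Proof.
move=> idK SK f; apply; first exact: idK.
move=> _ [a [b [Sa Sb ->]]]; case: (idK) => K0 KD KM.
pose Ka a := forall b, ideal_gen S' b -> K (a * b).
apply: (Sa Ka) b Sb => [|a' Sa' b' Sb'].
  split=> [b' _|p q Kp Kq b' Sb'|p q Kq b' Sb']; first by rewrite mul0r.
    by rewrite mulrDl; apply: KD; [apply: Kp | apply: Kq].
  by rewrite -mulrA; apply: KM; apply: Kq.
apply: (Sb' (fun b => K (a' * b))) => [|b'' Sb'']; last exact: SK.
split=> [|p q Kp Kq|p q Kq]; first by rewrite mulr0.
  by rewrite mulrDr; apply: KD.
by rewrite mulrCA; apply: KM.
Qed.

Lemma ideal_mul_gen_mul S S' a b :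
  S a -> S' b -> ideal_mul (ideal_gen S) (ideal_gen S') (a * b).
Proof.
by move=> Sa Sb; apply: ideal_gen_sub; exists a, b; split=> //; apply: ideal_gen_sub.
Qed.

Lemma is_lead_mono_mpolyX lt (m : 'X_{1..N}) :
  is_lead_mono lt ('X_[m] : {mpoly k[N]}) m.
Proof.
by split=> [|m']; rewrite msuppX mem_seq1 // => /eqP ->; rewrite eqxx.
Qed.

Lemma initial_ideal_lead lt I f m :
  I f -> is_lead_mono lt f m -> initial_ideal lt I 'X_[m].
Proof. by move=> If lead_m; apply: ideal_gen_sub; exists f, m. Qed.

Lemma initial_ideal_sub lt I J : (forall f, I f -> J f) ->
  forall f, initial_ideal lt I f -> initial_ideal lt J f.
Proof.
move=> IJ f; apply; first exact: ideal_gen_ideal.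
by move=> _ [g [m [Ig lead_m ->]]]; apply: initial_ideal_lead lead_m; apply: IJ.
Qed.

End Ideals.

Section Monomials.
Variables (k : fieldType) (N : nat).
Implicit Types (f g : {mpoly k[N]}) (m : 'X_{1..N}) (v : 'I_N -> k).

Lemma mevalX_eq0 v m i : v i = 0 -> (0 < m i)%N -> 'X_[m].@[v] = 0.
Proof.
move=> vi0 mi_gt0; rewrite mevalX (bigD1 i) //= vi0.
by rewrite -(prednK mi_gt0) exprS !mul0r.
Qed.

Lemma mpolyX_factor m i :
  (0 < m i)%N -> 'X_[m] = 'X_[m - U_(i)] * 'X_i :> {mpoly k[N]}.
Proof.
move=> mi_gt0; rewrite -mpolyXD submK //; apply/mnm_lepP => j.
by rewrite mnm1E; case: eqP => [<-|].
Qed.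

Lemma meval_in_vars_eq (R : pred nat) g v v' :
  in_vars R g -> (forall i : 'I_N, R i -> v i = v' i) -> g.@[v] = g.@[v'].
Proof.
move=> gR vv'; rewrite !mevalE; apply: eq_big_seq => m m_supp; congr (_ * _).
apply: eq_bigr => i _; have [->|mi_gt0] := posnP (m i); first by rewrite !expr0.
by rewrite vv' // (gR m i m_supp mi_gt0).
Qed.

Lemma meval_homog_scale g d c v :
  (forall m, m \in msupp g -> mdeg m = d) ->
  g.@[fun i => c * v i] = c ^+ d * g.@[v].
Proof.
move=> homg; rewrite !mevalE mulr_sumr; apply: eq_big_seq => m m_supp.
rewrite -(homg m m_supp) mdegE -prodrXr.
under eq_bigr do rewrite exprMn.
by rewrite big_split /= mulrCA.
Qed.

Definition mtrunc (P : pred 'X_{1..N}) f : {mpoly k[N]} :=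
  \sum_(m <- msupp f | P m) f@_m *: 'X_[m].

Variable P : pred 'X_{1..N}.

Lemma mcoeff_mtrunc f m : (mtrunc P f)@_m = if P m then f@_m else 0.
Proof.
rewrite /mtrunc raddf_sum /= big_mkcond /=.
under eq_bigr do rewrite mcoeffZ mcoeffX.
have [m_supp|m_nsupp] := boolP (m \in msupp f).
  rewrite (bigD1_seq m) ?msupp_uniq //= eqxx mulr1 big1 ?addr0 //.
  by move=> m' /negbTE ->; rewrite mulr0 if_same.
rewrite big1_seq => [|m' /andP[_ m'_supp]]; last first.
  rewrite (_ : m' == m = false) ?mulr0 ?if_same //.
  by apply: contraNF m_nsupp => /eqP <-.
by move: m_nsupp; rewrite mcoeff_msupp negbK => /eqP ->; rewrite if_same.
Qed.

Lemma msupp_mtrunc f m : (m \in msupp (mtrunc P f)) = P m && (m \in msupp f).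
Proof. by rewrite !mcoeff_msupp mcoeff_mtrunc; case: (P m); rewrite ?eqxx. Qed.

Lemma is_lead_mono_mtrunc lt f m :
  is_lead_mono lt f m -> P m -> is_lead_mono lt (mtrunc P f) m.
Proof.
move=> [m_supp m_max] Pm; split=> [|m']; first by rewrite msupp_mtrunc Pm.
by rewrite msupp_mtrunc => /andP[_]; apply: m_max.
Qed.

Lemma meval_mtrunc f v :
  (forall m, m \in msupp f -> ~~ P m -> 'X_[m].@[v] = 0) ->
  (mtrunc P f).@[v] = f.@[v].
Proof.
move=> outP0; rewrite {2}(mpolyE f) /mtrunc !raddf_sum /= [RHS](bigID P) /=.
rewrite [X in _ + X]big1_seq ?addr0 // => m /andP[nPm m_supp].
by rewrite mevalZ outP0 ?mulr0.
Qed.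

End Monomials.

Section Cones.
Variables (k : fieldType) (N : nat).
Hypothesis pchar_k0 : [pchar k] =i pred0.

Lemma natr_inj_pchar0 : injective (fun i : nat => i%:R : k).
Proof.
move/pcharf0P: pchar_k0 => natr_eq0 i j /= /eqP.
without loss le_ij : i j / (i <= j)%N.
  by move=> wlog_ij; case/orP: (leq_total i j) => /wlog_ij //; rewrite eq_sym => /[apply].
rewrite eq_sym -subr_eq0 -natrB // natr_eq0 subn_eq0 => le_ji.
by apply/eqP; rewrite eqn_leq le_ij.
Qed.

Lemma poly_eq0_nonzero_roots (p : {poly k}) :
  (forall t, t != 0 -> p.[t] = 0) -> p = 0.
Proof.
move/pcharf0P: pchar_k0 => natr_eq0 p_root.
apply: (@roots_geq_poly_eq0 _ _ [seq i.+1%:R | i <- iota 0 (size p)]).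
- by apply/allP => _ /mapP[i _ ->]; rewrite /root p_root ?natr_eq0.
- by rewrite map_inj_uniq ?iota_uniq // => i j /natr_inj_pchar0 [].
- by rewrite size_map size_iota.
Qed.

Definition axis_point (l : nat) (t : k) : 'I_N -> k :=
  fun i => if nat_of_ord i == l then t else 0.

Lemma meval_axis_point_poly (g : {mpoly k[N]}) l :
  exists G : {poly k}, forall t, G.[t] = g.@[axis_point l t].
Proof.
exists (mmap polyC (fun i : 'I_N => if nat_of_ord i == l then 'X else 0) g) => t.
rewrite mevalE horner_sum; apply: eq_bigr => m _.
rewrite hornerCM horner_prod; congr (_ * _); apply: eq_bigr => i _.
by rewrite horner_exp /axis_point; case: ifP; rewrite ?hornerX ?horner0.
Qed.

Lemma proj_closed_scale (W : ('I_N -> k) -> Prop) w c :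
  proj_closed W -> W w -> c != 0 -> W (fun i => c * w i).
Proof.
move=> [S [homS defW]] /defW[[i wi_neq0] Sw0] c_neq0; apply/defW; split.
  by exists i; rewrite mulf_neq0.
move=> s Ss; have [d homs] := homS s Ss.
by rewrite (meval_homog_scale _ _ homs) Sw0 ?mulr0.
Qed.

Lemma vanishing_on_axis (W : ('I_N -> k) -> Prop) w l (g : {mpoly k[N]}) :
  proj_closed W -> W w -> (forall i : 'I_N, i != l :> nat -> w i = 0) ->
  vanishing_ideal W g ->
  forall v, (forall i : 'I_N, i != l :> nat -> v i = 0) -> g.@[v] = 0.
Proof.
move=> projW Ww w_axis gW v v_axis.
have [i0 wi0_neq0] : exists i0, w i0 != 0.
  by case: projW => S [_ defW]; case: (defW w) => /(_ Ww)[].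
have i0_l : i0 = l :> nat by apply/eqP; apply: contraNT wi0_neq0 => /w_axis ->.
have w_scale s : axis_point l s =1 (fun i => s / w i0 * w i).
  move=> i; rewrite /axis_point; case: eqP => [i_l|/eqP i_l].
    by rewrite (_ : i = i0) ?divfK //; apply: val_inj; rewrite /= i_l i0_l.
  by rewrite (w_axis i) ?mulr0.
have [G G_axis] := meval_axis_point_poly g l.
have v_axis_point : v =1 axis_point l (v i0).
  move=> i; rewrite /axis_point; case: eqP => [i_l|/eqP]; last exact: v_axis.
  by congr v; apply: val_inj; rewrite /= i_l i0_l.
rewrite (meval_eq _ v_axis_point).
suff G0 : G = 0 by rewrite -G_axis G0 horner0.
apply: poly_eq0_nonzero_roots => s s_neq0; rewrite G_axis (meval_eq _ (w_scale s)).
by apply: gW; apply: proj_closed_scale; rewrite // mulf_neq0 ?invr_eq0.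
Qed.

Lemma vanishing_transfer (W W' : ('I_N -> k) -> Prop) w l (R : pred nat)
    (g : {mpoly k[N]}) :
  proj_closed W -> W w -> (forall i : 'I_N, i != l :> nat -> w i = 0) ->
  (forall v, W' v -> forall i : 'I_N, R i -> i != l :> nat -> v i = 0) ->
  vanishing_ideal W g -> in_vars R g -> vanishing_ideal W' g.
Proof.
move=> projW Ww w_axis W'_axis gW gR v W'v.
pose v' i := if nat_of_ord i == l then v i else 0.
rewrite (meval_in_vars_eq (v' := v') gR).
  by apply: (vanishing_on_axis projW Ww w_axis gW) => i /negbTE; rewrite /v' => ->.
by move=> i Ri; rewrite /v'; case: eqP => // /eqP; apply: W'_axis.
Qed.

End Cones.

Section InitialIdeals.
Variables (k : fieldType) (N : nat) (lt : rel 'X_{1..N}).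

Definition var_ideal (P : pred nat) : {mpoly k[N]} -> Prop :=
  ideal_gen (fun f => exists i : 'I_N, P i /\ f = 'X_i).

Lemma mpolyX_in_mul_var_ideal (P P' : pred nat) (m : 'X_{1..N}) (i j : 'I_N) :
  P i -> P' j -> i != j -> (0 < m i)%N -> (0 < m j)%N ->
  ideal_mul (var_ideal P) (var_ideal P') 'X_[m].
Proof.
move=> Pi P'j neq_ij mi_gt0 mj_gt0.
have mUj_gt0 : (0 < (m - U_(i))%MM j)%N by rewrite mnmBE mnm1E (negbTE neq_ij) subn0.
rewrite (mpolyX_factor k mi_gt0) (mpolyX_factor k mUj_gt0) -mulrA.
have [_ _ idM] : is_ideal (ideal_mul (var_ideal P) (var_ideal P')) := ideal_gen_ideal _.
apply: idM; rewrite mulrC.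
by apply: ideal_mul_gen_mul; [exists i | exists j].
Qed.

Lemma initial_ideal_restrict (W : ('I_N -> k) -> Prop) (R : pred nat) f m :
  (forall v, W v -> forall i : 'I_N, ~~ R i -> v i = 0) ->
  vanishing_ideal W f -> is_lead_mono lt f m ->
  (forall i : 'I_N, ~~ R i -> m i = 0%N) ->
  initial_ideal lt (fun g => vanishing_ideal W g /\ in_vars R g) 'X_[m].
Proof.
move=> W_R fW lead_m m_R.
pose P (m' : 'X_{1..N}) := [forall i : 'I_N, ~~ R i ==> (m' i == 0%N)].
apply: (initial_ideal_lead (f := mtrunc P f)); last first.
  by apply: is_lead_mono_mtrunc lead_m _; apply/forallP => i; apply/implyP => /m_R ->.
split=> [v Wv|m' i]; last first.
  rewrite msupp_mtrunc => /andP[/forallP/(_ i) Pm' _] m'i_gt0.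
  by apply: contraLR Pm' => nRi; rewrite nRi -lt0n.
rewrite meval_mtrunc ?fW // => m' _ /forallPn[i]; rewrite negb_imply -lt0n.
by case/andP=> nRi m'i_gt0; apply: mevalX_eq0 m'i_gt0; apply: W_R.
Qed.

End InitialIdeals.

Section Decomposition.
Variables (k : fieldType) (n l : nat) (Y Z : ('I_n.+1 -> k) -> Prop).
Variable lt : rel 'X_{1..n.+1}.
Hypothesis Y_low0 : forall v, Y v -> forall i : 'I_n.+1, (i < l)%N -> v i = 0.
Hypothesis Z_high0 : forall v, Z v -> forall i : 'I_n.+1, (l < i)%N -> v i = 0.

Let IX f := vanishing_ideal Y f /\ vanishing_ideal Z f.
Let inY :=
  initial_ideal lt (fun f => vanishing_ideal Y f /\ in_vars (fun i => l <= i)%N f).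
Let inZ :=
  initial_ideal lt (fun f => vanishing_ideal Z f /\ in_vars (fun i => i <= l)%N f).
Let T : {mpoly k[n.+1]} -> Prop :=
  ideal_mul (var_ideal (fun i => i < l)%N) (var_ideal (fun i => l < i)%N).

Lemma initial_ideal_sub_sum f :
  initial_ideal lt IX f -> ideal_add (ideal_add inY inZ) T f.
Proof.
have [idY idZ idT] : [/\ is_ideal inY, is_ideal inZ & is_ideal T].
  by split; apply: ideal_gen_ideal.
move=> inXf; apply: inXf => [|_ [g [m [[gY gZ] lead_m ->]]]].
  by do 2?apply: ideal_add_ideal.
have [/existsP[i /andP[il mi_gt0]] | /existsPn m_low0] :=
  boolP [exists i : 'I_n.+1, (i < l)%N && (0 < m i)%N].
  have [/existsP[j /andP[lj mj_gt0]] | /existsPn m_high0] :=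
    boolP [exists j : 'I_n.+1, (l < j)%N && (0 < m j)%N].
    apply: ideal_addr; first exact: ideal_add_ideal.
    apply: (@mpolyX_in_mul_var_ideal _ _ (fun i => i < l)%N (fun i => l < i)%N _ i j)
      => //.
    by rewrite -val_eqE neq_ltn /= (ltn_trans il lj).
  apply: ideal_addl => //; apply: ideal_addr => //.
  apply: (initial_ideal_restrict (R := fun i => (i <= l)%N) _ gZ lead_m) => [v Zv j|j].
    by rewrite -ltnNge; apply: Z_high0.
  by rewrite -ltnNge => lj; move: (m_high0 j); rewrite lj lt0n negbK => /eqP.
apply: ideal_addl => //; apply: ideal_addl => //.
apply: (initial_ideal_restrict (R := fun i => (l <= i)%N) _ gY lead_m) => [v Yv i|i].
  by rewrite -ltnNge; apply: Y_low0.
by rewrite -ltnNge => il; move: (m_low0 i); rewrite il lt0n negbK => /eqP.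
Qed.

Hypotheses (pchar_k0 : [pchar k] =i pred0).
Hypotheses (projY : proj_closed Y) (projZ : proj_closed Z).
Variable p : 'I_n.+1 -> k.
Hypotheses (Yp : Y p) (Zp : Z p).

Lemma sum_sub_initial_ideal f :
  ideal_add (ideal_add inY inZ) T f -> initial_ideal lt IX f.
Proof.
have p_axis (i : 'I_n.+1) : i != l :> nat -> p i = 0.
  by case: ltngtP => // [il|li] _; [apply: Y_low0 | apply: Z_high0].
have idX : is_ideal (initial_ideal lt IX) := ideal_gen_ideal _.
apply: (ideal_add_min idX) f; first apply: (ideal_add_min idX).
- apply: initial_ideal_sub => g [gY g_high]; split=> //.
  have Z_axis v : Z v -> forall i : 'I_n.+1, (l <= i)%N -> i != l :> nat -> v i = 0.
    by move=> Zv i li il; apply: Z_high0; rewrite // ltn_neqAle eq_sym il.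
  exact (vanishing_transfer pchar_k0 projY Yp p_axis Z_axis gY g_high).
- apply: initial_ideal_sub => g [gZ g_low]; split=> //.
  have Y_axis v : Y v -> forall i : 'I_n.+1, (i <= l)%N -> i != l :> nat -> v i = 0.
    by move=> Yv i il li; apply: Y_low0; rewrite // ltn_neqAle li.
  exact (vanishing_transfer pchar_k0 projZ Zp p_axis Y_axis gZ g_low).
apply: (ideal_mul_gen_min idX) => _ _ [i [il ->]] [j [lj ->]].
have : IX ('X_i * 'X_j).
  split=> v Wv; rewrite mevalM !mevalXU.
    by rewrite (Y_low0 Wv il) mul0r.
  by rewrite (Z_high0 Wv lj) mulr0.
rewrite -mpolyXD => IX_X.
exact (initial_ideal_lead IX_X (is_lead_mono_mpolyX _ lt _)).
Qed.

End Decomposition.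

Unset Implicit Arguments.

Theorem lemma3p1 (k : closedFieldType) (n l : nat)
  (Y Z : ('I_n.+1 -> k) -> Prop) (lt : rel 'X_{1..n.+1}) :
  [pchar k] =i pred0 ->
  (0 < l < n)%N ->
  proj_closed Y -> proj_closed Z ->
  (forall v, Y v -> forall i : 'I_n.+1, (i < l)%N -> v i = 0) ->
  (forall v, Z v -> forall i : 'I_n.+1, (l < i)%N -> v i = 0) ->
  (exists v, Y v /\ Z v) ->
  monomial_order lt ->
  let IY := vanishing_ideal Y in
  let IZ := vanishing_ideal Z in
  let IX := fun f => IY f /\ IZ f in
  let T := ideal_mul
             (ideal_gen (fun f => exists i : 'I_n.+1, (i < l)%N /\ f = 'X_i))
             (ideal_gen (fun f => exists i : 'I_n.+1, (l < i)%N /\ f = 'X_i)) in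
  let inY := initial_ideal lt (fun f => IY f /\ in_vars (fun i => l <= i)%N f) in
  let inZ := initial_ideal lt (fun f => IZ f /\ in_vars (fun i => i <= l)%N f) in
  forall f, initial_ideal lt IX f <-> ideal_add (ideal_add inY inZ) T f.
Proof.
move=> pchar_k0 _ projY projZ Y_low0 Z_high0 [p [Yp Zp]] _ IY IZ IX T inY inZ f.
split; first exact: initial_ideal_sub_sum.
exact: (sum_sub_initial_ideal Y_low0 Z_high0 pchar_k0 projY projZ Yp Zp).
Qed.
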